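(* Let $U\subset\mathbb{R}^3$ be open with coordinates $(p_1,p_2,p_3)$, let $\lambda_1,\lambda_2,\lambda_3$ be smooth real functions of one real variable, and let $f\colon U\to\mathbb{R}$ be smooth. For $\lambda\in\mathbb{R}$ define the $1$-form $$\alpha_\lambda=(\lambda-\lambda_2(p_2))(\lambda-\lambda_3(p_3))f_1dp_1+(\lambda-\lambda_1(p_1))(\lambda-\lambda_3(p_3))f_2dp_2+(\lambda-\lambda_1(p_1))(\lambda-\lambda_2(p_2))f_3dp_3 .$$ Then $\alpha_\lambda\wedge d\alpha_\lambda=0$ for all $\lambda\in\mathbb{R}$ if and only if $$(\lambda_2(p_2)-\lambda_3(p_3))f_1f_{23}+(\lambda_3(p_3)-\lambda_1(p_1))f_2f_{13}+(\lambda_1(p_1)-\lambda_2(p_2))f_3f_{12}=0\quad\text{on }U.$$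
   Context: $f_i=\partial f/\partial p_i$, $f_{ij}=\partial^2f/\partial p_i\partial p_j$; each $\lambda_i$ depends only on the coordinate $p_i$. *)

From Stdlib Require Import Reals.
Open Scope R_scope.

(* Open subsets of R^3 (box neighbourhoods, equivalent to Euclidean balls). *)
Definition is_open3 (U : R -> R -> R -> Prop) : Prop :=
  forall x y z, U x y z ->
    exists eps, 0 < eps /\
      forall a b c, Rabs (a - x) < eps -> Rabs (b - y) < eps ->
                    Rabs (c - z) < eps -> U a b c.

Definition continuous_on3 (U : R -> R -> R -> Prop) (g : R -> R -> R -> R) : Prop :=
  forall x y z, U x y z -> forall eps, 0 < eps ->
    exists del, 0 < del /\
      forall a b c, Rabs (a - x) < del -> Rabs (b - y) < del ->
                    Rabs (c - z) < del -> Rabs (g a b c - g x y z) < eps.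

Inductive coord : Type := P1 | P2 | P3.

Definition pd (i : coord) (g : R -> R -> R -> R) (x y z l : R) : Prop :=
  match i with
  | P1 => derivable_pt_lim (fun t => g t y z) x l
  | P2 => derivable_pt_lim (fun t => g x t z) y l
  | P3 => derivable_pt_lim (fun t => g x y t) z l
  end.

CoInductive smooth_on3 (U : R -> R -> R -> Prop) (g : R -> R -> R -> R) : Prop :=
  smooth_on3_intro :
    continuous_on3 U g ->
    (forall i : coord, exists gi : R -> R -> R -> R,
        (forall x y z, U x y z -> pd i g x y z (gi x y z)) /\ smooth_on3 U gi) ->
    smooth_on3 U g.

CoInductive smooth1 (g : R -> R) : Prop :=
  smooth1_intro :
    forall g' : R -> R, (forall x, derivable_pt_lim g x (g' x)) -> smooth1 g' ->
    smooth1 g.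

(* For a 1-form a1 dp1 + a2 dp2 + a3 dp3 on U, the condition  alpha /\ d alpha = 0
   on U, written in coordinates: the dp1^dp2^dp3 coefficient of alpha /\ d alpha is
     a1 (d2 a3 - d3 a2) - a2 (d1 a3 - d3 a1) + a3 (d1 a2 - d2 a1),
   where d_j a_i denotes the partial derivative of a_i w.r.t. p_j. *)
Definition wedge_d_zero (U : R -> R -> R -> Prop) (a1 a2 a3 : R -> R -> R -> R) : Prop :=
  forall x y z, U x y z ->
  forall d12 d13 d21 d23 d31 d32 : R,
    pd P2 a1 x y z d12 -> pd P3 a1 x y z d13 ->
    pd P1 a2 x y z d21 -> pd P3 a2 x y z d23 ->
    pd P1 a3 x y z d31 -> pd P2 a3 x y z d32 ->
    a1 x y z * (d32 - d23) - a2 x y z * (d31 - d13) + a3 x y z * (d21 - d12) = 0.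

Definition alpha1 (l1 l2 l3 : R -> R) (f1 : R -> R -> R -> R) (lam : R) :=
  fun x y z => (lam - l2 y) * (lam - l3 z) * f1 x y z.
Definition alpha2 (l1 l2 l3 : R -> R) (f2 : R -> R -> R -> R) (lam : R) :=
  fun x y z => (lam - l1 x) * (lam - l3 z) * f2 x y z.
Definition alpha3 (l1 l2 l3 : R -> R) (f3 : R -> R -> R -> R) (lam : R) :=
  fun x y z => (lam - l1 x) * (lam - l2 y) * f3 x y z.

(* The condition alpha_lambda /\ d alpha_lambda = 0 is a single coefficient of dp1 /\ dp2 /\ dp3.
   Expanding it, the terms carrying the derivatives of the lambda_i cancel, and once the mixed
   partials of f are known to commute (Schwarz's theorem, obtained from two mean value theorems
   applied to the second difference) the coefficient factors as
   -(lambda - lambda_1)(lambda - lambda_2)(lambda - lambda_3) times the expression of the statement.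
   Choosing lambda away from the three values lambda_i shows that the expression must vanish. *)

From Stdlib Require Import Reals Lra.
Open Scope R_scope.

Lemma Rabs_minus_diag_lt (w d : R) : 0 < d -> Rabs (w - w) < d.
Proof. intro Hd. rewrite Rminus_diag, Rabs_R0. exact Hd. Qed.

Lemma Rabs_minus_lt_of_interval (c s h d : R) : h < d -> c <= s <= c + h -> Rabs (s - c) < d.
Proof. intros Hhd Hs. rewrite Rabs_right; lra. Qed.

Lemma derivable_pt_lim_locally_eq (f g : R -> R) (x l r : R) : 0 < r ->
  (forall t, Rabs (t - x) < r -> f t = g t) ->
  derivable_pt_lim g x l -> derivable_pt_lim f x l.
Proof.
  intros Hr Heq Hg eps Heps. destruct (Hg eps Heps) as [d Hd].
  assert (Hm : 0 < Rmin d r) by (apply Rmin_pos; [apply cond_pos | exact Hr]).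
  exists (mkposreal _ Hm). intros h Hh0 Hh. simpl in Hh.
  rewrite !Heq.
  - apply Hd; [exact Hh0 | eapply Rlt_le_trans; [exact Hh | apply Rmin_l]].
  - apply Rabs_minus_diag_lt, Hr.
  - replace (x + h - x) with h by ring. eapply Rlt_le_trans; [exact Hh | apply Rmin_r].
Qed.

Lemma derivable_pt_lim_factor_l (L F : R -> R) (lam K t L' F' : R) :
  derivable_pt_lim L t L' -> derivable_pt_lim F t F' ->
  derivable_pt_lim (fun u => (lam - L u) * K * F u) t
    (- L' * K * F t + (lam - L t) * K * F').
Proof.
  intros HL HF.
  pose proof (derivable_pt_lim_mult _ _ t _ _
    (derivable_pt_lim_mult _ _ t _ _
       (derivable_pt_lim_minus _ _ t _ _ (derivable_pt_lim_const lam t) HL)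
       (derivable_pt_lim_const K t)) HF) as H.
  unfold mult_fct, minus_fct, fct_cte in H.
  replace (- L' * K * F t + (lam - L t) * K * F')
    with (((0 - L') * K + (lam - L t) * 0) * F t + (lam - L t) * K * F') by ring.
  exact H.
Qed.

Lemma derivable_pt_lim_factor_r (L F : R -> R) (lam K t L' F' : R) :
  derivable_pt_lim L t L' -> derivable_pt_lim F t F' ->
  derivable_pt_lim (fun u => K * (lam - L u) * F u) t
    (K * - L' * F t + K * (lam - L t) * F').
Proof.
  intros HL HF.
  pose proof (derivable_pt_lim_mult _ _ t _ _
    (derivable_pt_lim_mult _ _ t _ _ (derivable_pt_lim_const K t)
       (derivable_pt_lim_minus _ _ t _ _ (derivable_pt_lim_const lam t) HL)) HF) as H.
  unfold mult_fct, minus_fct, fct_cte in H.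
  replace (K * - L' * F t + K * (lam - L t) * F')
    with ((0 * (lam - L t) + K * (0 - L')) * F t + K * (lam - L t) * F') by ring.
  exact H.
Qed.

Lemma pd_unique (i : coord) (g : R -> R -> R -> R) (x y z l l' : R) :
  pd i g x y z l -> pd i g x y z l' -> l = l'.
Proof. destruct i; apply uniqueness_limite. Qed.

Lemma pd_eq_on (U : R -> R -> R -> Prop) (F G : R -> R -> R -> R) (i : coord) (x y z l : R) :
  is_open3 U -> (forall a b c, U a b c -> F a b c = G a b c) ->
  U x y z -> pd i G x y z l -> pd i F x y z l.
Proof.
  intros HO Heq HU. destruct (HO x y z HU) as [r [Hr Hbox]].
  destruct i; apply derivable_pt_lim_locally_eq with r; try exact Hr;
    intros t Ht; apply Heq, Hbox; auto using Rabs_minus_diag_lt.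
Qed.

Lemma second_difference_mvt (g g1 g12 : R -> R -> R) (x y h : R) : 0 < h ->
  (forall s t, x <= s <= x + h -> y <= t <= y + h ->
     derivable_pt_lim (fun u => g u t) s (g1 s t)) ->
  (forall s t, x <= s <= x + h -> y <= t <= y + h ->
     derivable_pt_lim (fun u => g1 s u) t (g12 s t)) ->
  exists s t, x <= s <= x + h /\ y <= t <= y + h /\
    g (x + h) (y + h) - g (x + h) y - g x (y + h) + g x y = g12 s t * (h * h).
Proof.
  intros Hh Hg1 Hg12.
  destruct (MVT_cor2 (fun s => g s (y + h) - g s y) (fun s => g1 s (y + h) - g1 s y) x (x + h))
    as [s [Es Hs]].
  { lra. }
  { intros c Hc. apply derivable_pt_lim_minus; apply Hg1; lra. }
  destruct (MVT_cor2 (g1 s) (g12 s) y (y + h)) as [t [Et Ht]].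
  { lra. }
  { intros c Hc. apply Hg12; lra. }
  exists s, t. split; [lra|]. split; [lra|].
  replace (x + h - x) with h in Es by ring. replace (y + h - y) with h in Et by ring.
  rewrite <- Rmult_assoc, <- Et. lra.
Qed.

Definition continuous_at2 (h : R -> R -> R) (x y : R) : Prop :=
  forall eps, 0 < eps -> exists del, 0 < del /\
    forall s t, Rabs (s - x) < del -> Rabs (t - y) < del -> Rabs (h s t - h x y) < eps.

Lemma schwarz (g g1 g2 g12 g21 : R -> R -> R) (x y r : R) : 0 < r ->
  (forall s t, Rabs (s - x) < r -> Rabs (t - y) < r ->
     derivable_pt_lim (fun u => g u t) s (g1 s t)) ->
  (forall s t, Rabs (s - x) < r -> Rabs (t - y) < r ->
     derivable_pt_lim (fun u => g s u) t (g2 s t)) ->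
  (forall s t, Rabs (s - x) < r -> Rabs (t - y) < r ->
     derivable_pt_lim (fun u => g1 s u) t (g12 s t)) ->
  (forall s t, Rabs (s - x) < r -> Rabs (t - y) < r ->
     derivable_pt_lim (fun u => g2 u t) s (g21 s t)) ->
  continuous_at2 g12 x y -> continuous_at2 g21 x y -> g12 x y = g21 x y.
Proof.
  intros Hr Hg1 Hg2 Hg12 Hg21 C12 C21.
  apply cond_eq. intros eps Heps.
  destruct (C12 (eps / 2)) as [d1 [Hd1 Hc1]]; [lra|].
  destruct (C21 (eps / 2)) as [d2 [Hd2 Hc2]]; [lra|].
  assert (Hh : exists h, 0 < h /\ h < r /\ h < d1 /\ h < d2).
  { exists (Rmin r (Rmin d1 d2) / 2).
    pose proof (Rmin_l r (Rmin d1 d2)); pose proof (Rmin_r r (Rmin d1 d2)).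
    pose proof (Rmin_l d1 d2); pose proof (Rmin_r d1 d2).
    assert (0 < Rmin r (Rmin d1 d2)) by (repeat apply Rmin_pos; assumption).
    lra. }
  destruct Hh as [h [Hh0 [Hhr [Hh1 Hh2]]]].
  destruct (second_difference_mvt g g1 g12 x y h Hh0) as [s [t [Hs [Ht E12]]]].
  { intros s t Hs Ht. apply Hg1; apply (Rabs_minus_lt_of_interval _ _ h); lra. }
  { intros s t Hs Ht. apply Hg12; apply (Rabs_minus_lt_of_interval _ _ h); lra. }
  (* Transposing g expands the same second difference in the other order. *)
  destruct (second_difference_mvt (fun s t => g t s) (fun s t => g2 t s) (fun s t => g21 t s)
              y x h Hh0) as [t' [s' [Ht' [Hs' E21]]]].
  { intros t' s' Ht' Hs'. apply Hg2; apply (Rabs_minus_lt_of_interval _ _ h); lra. }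
  { intros t' s' Ht' Hs'. apply Hg21; apply (Rabs_minus_lt_of_interval _ _ h); lra. }
  assert (Heq : g12 s t = g21 s' t').
  { apply Rmult_eq_reg_r with (h * h); [lra | apply Rgt_not_eq, Rmult_lt_0_compat; lra]. }
  assert (W1 : Rabs (g12 s t - g12 x y) < eps / 2)
    by (apply Hc1; apply (Rabs_minus_lt_of_interval _ _ h); lra).
  assert (W2 : Rabs (g21 s' t' - g21 x y) < eps / 2)
    by (apply Hc2; apply (Rabs_minus_lt_of_interval _ _ h); lra).
  apply Rabs_def2 in W1, W2. apply Rabs_def1; lra.
Qed.

Lemma continuous_on3_slices (U : R -> R -> R -> Prop) (k : R -> R -> R -> R) (x y z : R) :
  continuous_on3 U k -> U x y z ->
  continuous_at2 (fun s t => k s t z) x y /\ continuous_at2 (fun s t => k s y t) x z /\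
  continuous_at2 (fun s t => k x s t) y z.
Proof.
  intros Ck HU.
  split; [|split]; intros eps Heps; destruct (Ck x y z HU eps Heps) as [d [Hd Hc]];
    exists d; split; try exact Hd; intros s t Hs Ht; apply Hc; auto using Rabs_minus_diag_lt.
Qed.

Lemma mixed_partials_comm (U : R -> R -> R -> Prop) (g gi gj gij gji : R -> R -> R -> R)
  (i j : coord) :
  is_open3 U ->
  (forall x y z, U x y z -> pd i g x y z (gi x y z)) ->
  (forall x y z, U x y z -> pd j g x y z (gj x y z)) ->
  (forall x y z, U x y z -> pd j gi x y z (gij x y z)) ->
  (forall x y z, U x y z -> pd i gj x y z (gji x y z)) ->
  continuous_on3 U gij -> continuous_on3 U gji ->
  forall x y z, U x y z -> gij x y z = gji x y z.
Proof.
  intros HO Hi Hj Hij Hji Cij Cji x y z HU.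
  assert (Hdiag : i = j -> gij x y z = gji x y z).
  { intros <-. apply (pd_unique i gi x y z); [exact (Hij x y z HU) |].
    apply (pd_eq_on U gi gj); [exact HO | | exact HU | exact (Hji x y z HU)].
    intros a b c Habc. exact (pd_unique i g a b c _ _ (Hi a b c Habc) (Hj a b c Habc)). }
  destruct (HO x y z HU) as [r [Hr Hbox]].
  destruct (continuous_on3_slices U gij x y z Cij HU) as [Cij12 [Cij13 Cij23]].
  destruct (continuous_on3_slices U gji x y z Cji HU) as [Cji12 [Cji13 Cji23]].
  destruct i, j; try (apply Hdiag; reflexivity);
  [ apply (schwarz (fun s t => g s t z) (fun s t => gi s t z) (fun s t => gj s t z)
             (fun s t => gij s t z) (fun s t => gji s t z) x y r)
  | apply (schwarz (fun s t => g s y t) (fun s t => gi s y t) (fun s t => gj s y t)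
             (fun s t => gij s y t) (fun s t => gji s y t) x z r)
  | symmetry; apply (schwarz (fun s t => g s t z) (fun s t => gj s t z) (fun s t => gi s t z)
             (fun s t => gji s t z) (fun s t => gij s t z) x y r)
  | apply (schwarz (fun s t => g x s t) (fun s t => gi x s t) (fun s t => gj x s t)
             (fun s t => gij x s t) (fun s t => gji x s t) y z r)
  | symmetry; apply (schwarz (fun s t => g s y t) (fun s t => gj s y t) (fun s t => gi s y t)
             (fun s t => gji s y t) (fun s t => gij s y t) x z r)
  | symmetry; apply (schwarz (fun s t => g x s t) (fun s t => gj x s t) (fun s t => gi x s t)
             (fun s t => gji x s t) (fun s t => gij x s t) y z r) ];
  first
    [ assumption
    | intros s t Hs Ht; first [apply Hi | apply Hj | apply Hij | apply Hji];
      apply Hbox; auto using Rabs_minus_diag_lt ].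
Qed.

Lemma smooth_on3_pd_comm (U : R -> R -> R -> Prop) (f fi fj fij : R -> R -> R -> R)
  (i j : coord) :
  is_open3 U -> smooth_on3 U f ->
  (forall x y z, U x y z -> pd i f x y z (fi x y z)) ->
  (forall x y z, U x y z -> pd j f x y z (fj x y z)) ->
  (forall x y z, U x y z -> pd j fi x y z (fij x y z)) ->
  forall x y z, U x y z -> pd i fj x y z (fij x y z).
Proof.
  intros HO [_ Sf] Hfi Hfj Hfij x y z HU.
  destruct (Sf i) as [gi [Hgi [_ Sgi]]]. destruct (Sf j) as [gj [Hgj [_ Sgj]]].
  destruct (Sgi j) as [gij [Hgij [Cgij _]]]. destruct (Sgj i) as [gji [Hgji [Cgji _]]].
  assert (Ei : forall a b c, U a b c -> fi a b c = gi a b c)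
    by (intros a b c Habc; exact (pd_unique i f a b c _ _ (Hfi a b c Habc) (Hgi a b c Habc))).
  assert (Ej : forall a b c, U a b c -> fj a b c = gj a b c)
    by (intros a b c Habc; exact (pd_unique j f a b c _ _ (Hfj a b c Habc) (Hgj a b c Habc))).
  assert (Eij : fij x y z = gij x y z).
  { apply (pd_unique j fi x y z); [exact (Hfij x y z HU) |].
    exact (pd_eq_on U fi gi j x y z _ HO Ei HU (Hgij x y z HU)). }
  rewrite Eij, (mixed_partials_comm U f gi gj gij gji i j HO Hgi Hgj Hgij Hgji Cgij Cgji x y z HU).
  exact (pd_eq_on U fj gj i x y z _ HO Ej HU (Hgji x y z HU)).
Qed.

Lemma wedge_d_zero_iff (U : R -> R -> R -> Prop)
  (a1 a2 a3 a12 a13 a21 a23 a31 a32 : R -> R -> R -> R) :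
  (forall x y z, U x y z -> pd P2 a1 x y z (a12 x y z)) ->
  (forall x y z, U x y z -> pd P3 a1 x y z (a13 x y z)) ->
  (forall x y z, U x y z -> pd P1 a2 x y z (a21 x y z)) ->
  (forall x y z, U x y z -> pd P3 a2 x y z (a23 x y z)) ->
  (forall x y z, U x y z -> pd P1 a3 x y z (a31 x y z)) ->
  (forall x y z, U x y z -> pd P2 a3 x y z (a32 x y z)) ->
  wedge_d_zero U a1 a2 a3 <->
  forall x y z, U x y z ->
    a1 x y z * (a32 x y z - a23 x y z) - a2 x y z * (a31 x y z - a13 x y z)
    + a3 x y z * (a21 x y z - a12 x y z) = 0.
Proof.
  intros H12 H13 H21 H23 H31 H32. split.
  - intros Hw x y z HU. apply Hw; auto.
  - intros Hc x y z HU d12 d13 d21 d23 d31 d32 D12 D13 D21 D23 D31 D32.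
    rewrite (pd_unique _ _ _ _ _ _ _ D12 (H12 x y z HU)),
      (pd_unique _ _ _ _ _ _ _ D13 (H13 x y z HU)), (pd_unique _ _ _ _ _ _ _ D21 (H21 x y z HU)),
      (pd_unique _ _ _ _ _ _ _ D23 (H23 x y z HU)), (pd_unique _ _ _ _ _ _ _ D31 (H31 x y z HU)),
      (pd_unique _ _ _ _ _ _ _ D32 (H32 x y z HU)).
    exact (Hc x y z HU).
Qed.

Section AlphaForm.

Variables (U : R -> R -> R -> Prop) (l1 l2 l3 l1' l2' l3' : R -> R)
  (f1 f2 f3 f12 f13 f23 : R -> R -> R -> R).
Hypotheses (Hl1 : forall t, derivable_pt_lim l1 t (l1' t))
  (Hl2 : forall t, derivable_pt_lim l2 t (l2' t))
  (Hl3 : forall t, derivable_pt_lim l3 t (l3' t)).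
Hypotheses (Hf12 : forall x y z, U x y z -> pd P2 f1 x y z (f12 x y z))
  (Hf21 : forall x y z, U x y z -> pd P1 f2 x y z (f12 x y z))
  (Hf13 : forall x y z, U x y z -> pd P3 f1 x y z (f13 x y z))
  (Hf31 : forall x y z, U x y z -> pd P1 f3 x y z (f13 x y z))
  (Hf23 : forall x y z, U x y z -> pd P3 f2 x y z (f23 x y z))
  (Hf32 : forall x y z, U x y z -> pd P2 f3 x y z (f23 x y z)).

Lemma pd_alpha1_P2 lam x y z : U x y z -> pd P2 (alpha1 l1 l2 l3 f1 lam) x y z
  (- l2' y * (lam - l3 z) * f1 x y z + (lam - l2 y) * (lam - l3 z) * f12 x y z).
Proof.
  intro HU. apply (derivable_pt_lim_factor_l l2 (fun t => f1 x t z));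
    [apply Hl2 | exact (Hf12 x y z HU)].
Qed.

Lemma pd_alpha1_P3 lam x y z : U x y z -> pd P3 (alpha1 l1 l2 l3 f1 lam) x y z
  ((lam - l2 y) * - l3' z * f1 x y z + (lam - l2 y) * (lam - l3 z) * f13 x y z).
Proof.
  intro HU. apply (derivable_pt_lim_factor_r l3 (fun t => f1 x y t));
    [apply Hl3 | exact (Hf13 x y z HU)].
Qed.

Lemma pd_alpha2_P1 lam x y z : U x y z -> pd P1 (alpha2 l1 l2 l3 f2 lam) x y z
  (- l1' x * (lam - l3 z) * f2 x y z + (lam - l1 x) * (lam - l3 z) * f12 x y z).
Proof.
  intro HU. apply (derivable_pt_lim_factor_l l1 (fun t => f2 t y z));
    [apply Hl1 | exact (Hf21 x y z HU)].
Qed.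

Lemma pd_alpha2_P3 lam x y z : U x y z -> pd P3 (alpha2 l1 l2 l3 f2 lam) x y z
  ((lam - l1 x) * - l3' z * f2 x y z + (lam - l1 x) * (lam - l3 z) * f23 x y z).
Proof.
  intro HU. apply (derivable_pt_lim_factor_r l3 (fun t => f2 x y t));
    [apply Hl3 | exact (Hf23 x y z HU)].
Qed.

Lemma pd_alpha3_P1 lam x y z : U x y z -> pd P1 (alpha3 l1 l2 l3 f3 lam) x y z
  (- l1' x * (lam - l2 y) * f3 x y z + (lam - l1 x) * (lam - l2 y) * f13 x y z).
Proof.
  intro HU. apply (derivable_pt_lim_factor_l l1 (fun t => f3 t y z));
    [apply Hl1 | exact (Hf31 x y z HU)].
Qed.

Lemma pd_alpha3_P2 lam x y z : U x y z -> pd P2 (alpha3 l1 l2 l3 f3 lam) x y z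
  ((lam - l1 x) * - l2' y * f3 x y z + (lam - l1 x) * (lam - l2 y) * f23 x y z).
Proof.
  intro HU. apply (derivable_pt_lim_factor_r l2 (fun t => f3 x t z));
    [apply Hl2 | exact (Hf32 x y z HU)].
Qed.

Lemma alpha_wedge_iff (lam : R) :
  wedge_d_zero U (alpha1 l1 l2 l3 f1 lam) (alpha2 l1 l2 l3 f2 lam) (alpha3 l1 l2 l3 f3 lam) <->
  forall x y z, U x y z ->
    (lam - l1 x) * (lam - l2 y) * (lam - l3 z) *
    ((l2 y - l3 z) * f1 x y z * f23 x y z + (l3 z - l1 x) * f2 x y z * f13 x y z
     + (l1 x - l2 y) * f3 x y z * f12 x y z) = 0.
Proof.
  rewrite (wedge_d_zero_iff U _ _ _ _ _ _ _ _ _ (pd_alpha1_P2 lam) (pd_alpha1_P3 lam)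
             (pd_alpha2_P1 lam) (pd_alpha2_P3 lam) (pd_alpha3_P1 lam) (pd_alpha3_P2 lam)).
  unfold alpha1, alpha2, alpha3.
  (* The coefficient is minus the right-hand side: the terms in l1', l2', l3' cancel. *)
  split; intros H x y z HU; specialize (H x y z HU); lra.
Qed.

End AlphaForm.

Lemma eq_0_of_cubic_mul_eq_0 (a b c e : R) :
  (forall lam, (lam - a) * (lam - b) * (lam - c) * e = 0) -> e = 0.
Proof.
  intro H. set (lam := Rabs a + Rabs b + Rabs c + 1).
  assert (Hp : (lam - a) * (lam - b) * (lam - c) <> 0).
  { pose proof (Rle_abs a); pose proof (Rle_abs b); pose proof (Rle_abs c).
    pose proof (Rabs_pos a); pose proof (Rabs_pos b); pose proof (Rabs_pos c).
    unfold lam. repeat apply Rmult_integral_contrapositive_currified; lra. }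
  destruct (Rmult_integral _ _ (H lam)) as [Hz | Hz]; [contradiction | exact Hz].
Qed.

Theorem mainTheorem4
  (U : R -> R -> R -> Prop) (l1 l2 l3 : R -> R) (f : R -> R -> R -> R)
  (f1 f2 f3 f12 f13 f23 : R -> R -> R -> R) :
  is_open3 U ->
  smooth1 l1 -> smooth1 l2 -> smooth1 l3 ->
  smooth_on3 U f ->
  (forall x y z, U x y z -> pd P1 f x y z (f1 x y z)) ->
  (forall x y z, U x y z -> pd P2 f x y z (f2 x y z)) ->
  (forall x y z, U x y z -> pd P3 f x y z (f3 x y z)) ->
  (forall x y z, U x y z -> pd P2 f1 x y z (f12 x y z)) ->
  (forall x y z, U x y z -> pd P3 f1 x y z (f13 x y z)) ->
  (forall x y z, U x y z -> pd P3 f2 x y z (f23 x y z)) ->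
  ((forall lam : R,
      wedge_d_zero U (alpha1 l1 l2 l3 f1 lam) (alpha2 l1 l2 l3 f2 lam)
                     (alpha3 l1 l2 l3 f3 lam))
   <->
   (forall x y z, U x y z ->
      (l2 y - l3 z) * f1 x y z * f23 x y z
    + (l3 z - l1 x) * f2 x y z * f13 x y z
    + (l1 x - l2 y) * f3 x y z * f12 x y z = 0)).
Proof.
  intros HO [l1' Hl1 _] [l2' Hl2 _] [l3' Hl3 _] Sf Hf1 Hf2 Hf3 Hf12 Hf13 Hf23.
  pose proof (smooth_on3_pd_comm U f f1 f2 f12 P1 P2 HO Sf Hf1 Hf2 Hf12) as Hf21.
  pose proof (smooth_on3_pd_comm U f f1 f3 f13 P1 P3 HO Sf Hf1 Hf3 Hf13) as Hf31.
  pose proof (smooth_on3_pd_comm U f f2 f3 f23 P2 P3 HO Sf Hf2 Hf3 Hf23) as Hf32.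
  setoid_rewrite (alpha_wedge_iff U l1 l2 l3 l1' l2' l3' f1 f2 f3 f12 f13 f23
                    Hl1 Hl2 Hl3 Hf12 Hf21 Hf13 Hf31 Hf23 Hf32).
  split.
  - intros H x y z HU. apply (eq_0_of_cubic_mul_eq_0 (l1 x) (l2 y) (l3 z)).
    intro lam. exact (H lam x y z HU).
  - intros H lam x y z HU. rewrite (H x y z HU). ring.
Qed.
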